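(* Let $(S,\omega)$ be a real symplectic vector space with positive polarization $E$ and associated complex structure $j$. For every unitary $h\in U(E)$ such that $h-\mathrm{id}$ is invertible, $$ {\det}^{1/2}\big(\tfrac12\mathrm{id}+iA(\iota(h))\big)=\frac{1}{\det(\mathrm{id}-h^{-1})}.$$
   Context: A positive polarization of $S$ is a Lagrangian subspace $E\subset S\otimes\mathbb C$ with $\frac1i\omega(x,\bar x)>0$ for all nonzero $x\in E$; $E$ carries the Hermitian product $(x,y)\mapsto\frac1i\omega(x,\bar y)$ and $U(E)$ is its unitary group. Let $j$ be the complex structure on $S$ with $E=\ker(j-i\,\mathrm{id})\subset S\otimes\mathbb C$; $\mathrm{sym}(S,j)$ is the space of endomorphisms of $S$ symmetric for the scalar product $\omega(X,jY)$; for $A\in\mathrm{sym}(S,j)$, ${\det}^{1/2}(\tfrac12\mathrm{id}+iA)$ is the square root of $\det(\tfrac12\mathrm{id}+iA)$ depending continuously on $A$ and positive at $A=0$. For $g\in\mathrm{Sp}(S)$ with $\mathrm{id}-g$ invertible, $A(g):=\tfrac12(\mathrm{id}+g)(\mathrm{id}-g)^{-1}j\in\mathrm{sym}(S,j)$. The map $\iota:U(E)\to\mathrm{Sp}(S)$ sends $h$ to the linear symplectomorphism $g$ of $S$ whose complexification acts as $h$ on $E$ and as $\bar h$ on $\overline E$ (its image is the set of elements commuting with $j$). *)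

From Stdlib Require Import Reals List.
Open Scope R_scope.

Record Cplx := mkC { Cre : R; Cim : R }.
Definition C0 : Cplx := mkC 0 0.
Definition C1 : Cplx := mkC 1 0.
Definition Ci : Cplx := mkC 0 1.
Definition RC (x : R) : Cplx := mkC x 0.
Definition Cadd (z w : Cplx) : Cplx := mkC (Cre z + Cre w) (Cim z + Cim w).
Definition Copp (z : Cplx) : Cplx := mkC (- Cre z) (- Cim z).
Definition Csub (z w : Cplx) : Cplx := Cadd z (Copp w).
Definition Cmul (z w : Cplx) : Cplx :=
  mkC (Cre z * Cre w - Cim z * Cim w) (Cre z * Cim w + Cim z * Cre w).
Definition Cconj (z : Cplx) : Cplx := mkC (Cre z) (- Cim z).
Definition Cnorm (z : Cplx) : R := sqrt (Cre z ^ 2 + Cim z ^ 2).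
(* multiplicative inverse (the value at 0 is irrelevant) *)
Definition Cinv (z : Cplx) : Cplx :=
  let d := Cre z ^ 2 + Cim z ^ 2 in mkC (Cre z / d) (- Cim z / d).

Definition Rsum (n : nat) (f : nat -> R) : R := fold_right Rplus 0 (map f (seq 0 n)).
Definition Csum (n : nat) (f : nat -> Cplx) : Cplx := fold_right Cadd C0 (map f (seq 0 n)).

(* ---------- vectors and matrices (entries outside the size are ignored) ---------- *)
Definition Rvec := nat -> R.
Definition Cvec := nat -> Cplx.
Definition Rmat := nat -> nat -> R.
Definition Cmat := nat -> nat -> Cplx.

Definition Rid : Rmat := fun i k => if Nat.eqb i k then 1 else 0.
Definition Cid : Cmat := fun i k => if Nat.eqb i k then C1 else C0.
Definition Rzero : Rmat := fun _ _ => 0.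

Definition Radd_m (A B : Rmat) : Rmat := fun i k => A i k + B i k.
Definition Rsub_m (A B : Rmat) : Rmat := fun i k => A i k - B i k.
Definition Rscale_m (c : R) (A : Rmat) : Rmat := fun i k => c * A i k.
Definition Rmul_m (p : nat) (A B : Rmat) : Rmat := fun i k => Rsum p (fun l => A i l * B l k).
Definition Rmv (p : nat) (A : Rmat) (x : Rvec) : Rvec := fun i => Rsum p (fun l => A i l * x l).

Definition Csub_m (A B : Cmat) : Cmat := fun i k => Csub (A i k) (B i k).
Definition Cmul_m (p : nat) (A B : Cmat) : Cmat := fun i k => Csum p (fun l => Cmul (A i l) (B l k)).
Definition Cmv (p : nat) (A : Cmat) (x : Cvec) : Cvec := fun i => Csum p (fun l => Cmul (A i l) (x l)).
Definition Cconj_m (A : Cmat) : Cmat := fun i k => Cconj (A i k).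
Definition complexify (A : Rmat) : Cmat := fun i k => RC (A i k).

Definition Rmat_eq (m n : nat) (A B : Rmat) : Prop :=
  forall i k, (i < m)%nat -> (k < n)%nat -> A i k = B i k.
Definition Cmat_eq (m n : nat) (A B : Cmat) : Prop :=
  forall i k, (i < m)%nat -> (k < n)%nat -> A i k = B i k.

Definition Cinvertible (n : nat) (A : Cmat) : Prop :=
  exists N, Cmat_eq n n (Cmul_m n A N) Cid /\ Cmat_eq n n (Cmul_m n N A) Cid.

(* determinant of the n x n upper-left block, by Laplace expansion along row 0 *)
Definition Csign (k : nat) : Cplx := if Nat.even k then C1 else Copp C1.
Fixpoint Cdet (n : nat) (M : Cmat) : Cplx :=
  match n with
  | O => C1
  | S n' => Csum n (fun k => Cmul (Cmul (Csign k) (M O k))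
                    (Cdet n' (fun i l => M (S i) (if Nat.ltb l k then l else S l))))
  end.

(* ---------- the symplectic space S = R^m with form omega (matrix w) ---------- *)
Definition omegaR (m : nat) (w : Rmat) (x y : Rvec) : R :=
  Rsum m (fun i => Rsum m (fun k => x i * w i k * y k)).
(* complex-bilinear extension of omega to S (x) Cplx = Cplx^m *)
Definition omegaC (m : nat) (w : Rmat) (x y : Cvec) : Cplx :=
  Csum m (fun i => Csum m (fun k => Cmul (Cmul (x i) (RC (w i k))) (y k))).
(* the Hermitian product (x,y) |-> (1/i) omega(x, conj y);  1/i = -i *)
Definition hermE (m : nat) (w : Rmat) (x y : Cvec) : Cplx :=
  Cmul (Copp Ci) (omegaC m w x (fun i => Cconj (y i))).

Definition symplectic_form (m : nat) (w : Rmat) : Prop :=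
  (forall i k, (i < m)%nat -> (k < m)%nat -> w k i = - w i k) /\
  exists W, Rmat_eq m m (Rmul_m m w W) Rid /\ Rmat_eq m m (Rmul_m m W w) Rid.

(* E := column span of the m x n complex matrix B (columns a basis of E).
   E is a positive polarization: Lagrangian (isotropic, dim E = m/2, the
   latter imposed by m = 2n and independence of the columns) and
   (1/i) omega(x, conj x) > 0 for nonzero x in E. *)
Definition positive_polarization (m n : nat) (w : Rmat) (B : Cmat) : Prop :=
  m = (2 * n)%nat /\
  (forall a : Cvec, (forall i, (i < m)%nat -> Cmv n B a i = C0) ->
      forall k, (k < n)%nat -> a k = C0) /\
  (forall a b : Cvec, omegaC m w (Cmv n B a) (Cmv n B b) = C0) /\
  (forall a : Cvec, (exists k, (k < n)%nat /\ a k <> C0) ->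
      Cim (hermE m w (Cmv n B a) (Cmv n B a)) = 0 /\
      Cre (hermE m w (Cmv n B a) (Cmv n B a)) > 0).

(* j is the complex structure on S with E = ker (j - i id) *)
Definition complex_structure_of (m n : nat) (j : Rmat) (B : Cmat) : Prop :=
  Rmat_eq m m (Rmul_m m j j) (Rscale_m (-1) Rid) /\
  Cmat_eq m n (Cmul_m m (complexify j) B) (fun i k => Cmul Ci (B i k)).

(* h in U(E), written in the basis B: h (B a) = B (M a); h preserves the
   Hermitian product of E *)
Definition unitary_on_E (m n : nat) (w : Rmat) (B M : Cmat) : Prop :=
  forall a b : Cvec,
    hermE m w (Cmv n B (Cmv n M a)) (Cmv n B (Cmv n M b)) =
    hermE m w (Cmv n B a) (Cmv n B b).

(* g = iota(h): the real map whose complexification acts as h on E and as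
   conj h on conj E *)
Definition is_iota (m n : nat) (B M : Cmat) (g : Rmat) : Prop :=
  Cmat_eq m n (Cmul_m m (complexify g) B) (Cmul_m n B M) /\
  Cmat_eq m n (Cmul_m m (complexify g) (Cconj_m B)) (Cmul_m n (Cconj_m B) (Cconj_m M)).

(* A in sym(S,j): symmetric for the scalar product omega(X, jY) *)
Definition is_sym (m : nat) (w j A : Rmat) : Prop :=
  forall x y : Rvec,
    omegaR m w (Rmv m A x) (Rmv m j y) = omegaR m w x (Rmv m j (Rmv m A y)).

(* f is "det^{1/2}(1/2 id + i A)": a square root of det(1/2 id + iA) on
   sym(S,j), continuous there, and positive at A = 0 *)
Definition sqrt_det_branch (m : nat) (w j : Rmat) (f : Rmat -> Cplx) : Prop :=
  (forall A0, is_sym m w j A0 -> forall eps, eps > 0 ->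
     exists delta, delta > 0 /\
       forall A, is_sym m w j A ->
         (forall i k, (i < m)%nat -> (k < m)%nat -> Rabs (A i k - A0 i k) < delta) ->
         Cnorm (Csub (f A) (f A0)) < eps) /\
  (forall A, is_sym m w j A ->
     Cmul (f A) (f A) =
     Cdet m (fun i k => Cadd (RC (/2 * Rid i k)) (Cmul Ci (RC (A i k))))) /\
  Cim (f Rzero) = 0 /\ Cre (f Rzero) > 0.

(* A(g) = 1/2 (id + g) (id - g)^{-1} j, where P is the inverse of id - g *)
Definition A_of (m : nat) (g P j : Rmat) : Rmat :=
  Rscale_m (/2) (Rmul_m m (Rmul_m m (Radd_m Rid g) P) j).

(* Let Q = (B, conj B) be the basis of S (x) C adapted to E (+) conj E.  In it
   g = iota(h) is diag(h, conj h) and j is diag(i, -i), so A = A(g) is block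
   diagonal and 1/2 + i t A = diag(X t, X' t) with X t = 1/2 (1 + t T), where
   T = (1 + h) (h - 1)^-1 is the Cayley transform of h.  Unitarity of h makes T
   skew for the Hermitian form K of E; hence det (X' t) = det (X t), and
   det (X t) <> 0 for real t.  So t |-> det (X t) is a continuous nowhere-zero
   square root of det (1/2 + i t A), positive at t = 0, and it coincides with
   det^1/2 along t |-> t A.  Finally X 1 = h (h - 1)^-1, whose determinant is
   1 / det (1 - h^-1). *)

From Pilot Require Import Defs.
From Stdlib Require Import Reals Lra FunctionalExtensionality.
From HB Require Import structures.
From mathcomp Require Import all_boot all_order all_algebra.
From mathcomp Require Import Rstruct.

Set Implicit Arguments.
Unset Strict Implicit.
Unset Printing Implicit Defensive.
Import GRing.Theory.

Lemma Cplx_ext (z w : Cplx) : Cre z = Cre w -> Cim z = Cim w -> z = w.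
Proof. by case: z; case: w => /= ? ? ? ? -> ->. Qed.

Definition Cpair (z : Cplx) : R * R := (Cre z, Cim z).
Definition Cunpair (p : R * R) : Cplx := mkC p.1 p.2.
Lemma CpairK : cancel Cpair Cunpair. Proof. by case. Qed.
HB.instance Definition _ := Choice.copy Cplx (can_type CpairK).

Local Open Scope R_scope.

Lemma CaddA : associative Cadd. Proof. by move=> *; apply: Cplx_ext => /=; ring. Qed.
Lemma CaddC : commutative Cadd. Proof. by move=> *; apply: Cplx_ext => /=; ring. Qed.
Lemma Cadd0 : left_id Defs.C0 Cadd. Proof. by move=> *; apply: Cplx_ext => /=; ring. Qed.
Lemma CaddN : left_inverse Defs.C0 Copp Cadd.
Proof. by move=> *; apply: Cplx_ext => /=; ring. Qed.
HB.instance Definition _ := GRing.isZmodule.Build Cplx CaddA CaddC Cadd0 CaddN.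

Lemma CmulA : associative Cmul. Proof. by move=> *; apply: Cplx_ext => /=; ring. Qed.
Lemma CmulC : commutative Cmul. Proof. by move=> *; apply: Cplx_ext => /=; ring. Qed.
Lemma Cmul1 : left_id Defs.C1 Cmul. Proof. by move=> *; apply: Cplx_ext => /=; ring. Qed.
Lemma CmulDl : left_distributive Cmul Cadd.
Proof. by move=> *; apply: Cplx_ext => /=; ring. Qed.
Lemma C1_neq0 : Defs.C1 != Defs.C0.
Proof. by apply/eqP => /(f_equal Cre) /= /R1_neq_R0. Qed.
HB.instance Definition _ :=
  GRing.Zmodule_isComNzRing.Build Cplx CmulA CmulC Cmul1 CmulDl C1_neq0.

Lemma CmulVz (z : Cplx) : z != 0%R -> Cmul (Cinv z) z = Defs.C1.
Proof.
move/eqP=> z_neq0; have d_neq0 : Cre z ^ 2 + Cim z ^ 2 <> 0.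
  by move=> d0; apply: z_neq0; apply: Cplx_ext => /=; nra.
by apply: Cplx_ext => /=; field; contradict d_neq0; nra.
Qed.
Lemma Cinv0 : Cinv 0%R = 0%R.
Proof. by apply: Cplx_ext; rewrite /= /Rdiv; ring. Qed.
HB.instance Definition _ := GRing.ComNzRing_isField.Build Cplx CmulVz Cinv0.

Lemma CmulE (z w : Cplx) : Cmul z w = (z * w)%R. Proof. by []. Qed.

Lemma RC_add x y : RC (x + y) = (RC x + RC y)%R.
Proof. by apply: Cplx_ext => /=; ring. Qed.
Lemma RC_mul x y : RC (x * y) = (RC x * RC y)%R.
Proof. by apply: Cplx_ext => /=; ring. Qed.
Lemma RC_sub x y : RC (x - y) = (RC x - RC y)%R.
Proof. by apply: Cplx_ext => /=; ring. Qed.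
Lemma RC_opp x : RC (- x) = (- RC x)%R.
Proof. by apply: Cplx_ext => /=; ring. Qed.
Lemma RC_inj : injective RC.
Proof. by move=> x y /(f_equal Cre). Qed.
Lemma RC_pow x k : RC (x ^ k) = (RC x ^+ k)%R.
Proof. by elim: k => [|k IH] //=; rewrite RC_mul IH exprS. Qed.
Lemma Cconj_RC x : Cconj (RC x) = RC x.
Proof. by apply: Cplx_ext => /=; ring. Qed.
Lemma CconjK : involutive Cconj.
Proof. by move=> z; apply: Cplx_ext => /=; ring. Qed.
Lemma Cconj_Ci : Cconj Ci = (- Ci)%R.
Proof. by apply: Cplx_ext => /=; ring. Qed.

Lemma Cconj_is_zmod_morphism : zmod_morphism Cconj.
Proof. by move=> x y; apply: Cplx_ext => /=; ring. Qed.
Lemma Cconj_is_monoid_morphism : monoid_morphism Cconj.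
Proof. by split=> [|x y]; apply: Cplx_ext => /=; ring. Qed.
HB.instance Definition _ :=
  GRing.isZmodMorphism.Build Cplx Cplx Cconj Cconj_is_zmod_morphism.
HB.instance Definition _ :=
  GRing.isMonoidMorphism.Build Cplx Cplx Cconj Cconj_is_monoid_morphism.

Definition Ccontinuous (F : R -> Cplx) : Prop :=
  forall t, continuity_pt (fun s => Cre (F s)) t /\ continuity_pt (fun s => Cim (F s)) t.

Lemma Ccontinuous_const c : Ccontinuous (fun _ => c).
Proof. by move=> t; split; apply: continuity_pt_const. Qed.

Lemma Ccontinuous_RC : Ccontinuous RC.
Proof.
move=> t; split; last exact: continuity_pt_const.
exact: derivable_continuous_pt (derivable_pt_id t).
Qed.

Lemma Ccontinuous_add F G :
  Ccontinuous F -> Ccontinuous G -> Ccontinuous (fun s => Cadd (F s) (G s)).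
Proof.
by move=> cF cG t; case: (cF t) (cG t) => ? ? [? ?]; split; apply: continuity_pt_plus.
Qed.

Lemma Ccontinuous_mul F G :
  Ccontinuous F -> Ccontinuous G -> Ccontinuous (fun s => Cmul (F s) (G s)).
Proof.
move=> cF cG t; case: (cF t) (cG t) => ? ? [? ?]; split.
  by apply: continuity_pt_minus; apply: continuity_pt_mult.
by apply: continuity_pt_plus; apply: continuity_pt_mult.
Qed.

Lemma Ccontinuous_Csum n (F : R -> nat -> Cplx) :
  (forall k, Ccontinuous (fun s => F s k)) -> Ccontinuous (fun s => Csum n (F s)).
Proof.
move=> cF; rewrite /Csum; elim: (List.seq 0 n) => [|a l IH] /=.
  exact: Ccontinuous_const.
exact: Ccontinuous_add.
Qed.

Lemma Ccontinuous_Cdet n (E : R -> Cmat) :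
  (forall i k, Ccontinuous (fun s => E s i k)) -> Ccontinuous (fun s => Cdet n (E s)).
Proof.
elim: n E => [|n IH] E cE /=; first exact: Ccontinuous_const.
apply: Ccontinuous_Csum => k; apply: Ccontinuous_mul.
  by apply: Ccontinuous_mul => //; apply: Ccontinuous_const.
by apply: (IH (fun s i l => E s i.+1 (if Nat.ltb l k then l else l.+1))).
Qed.

Lemma continuity_pt_eps (F : R -> R) t0 :
  (forall eps, eps > 0 -> exists d, d > 0 /\
     forall t, Rabs (t - t0) < d -> Rabs (F t - F t0) < eps) ->
  continuity_pt F t0.
Proof.
move=> H eps eps_gt0; have [d [d_gt0 Hd]] := H eps eps_gt0.
by exists d; split=> // t [_ ?]; apply: Hd.
Qed.

Lemma Rabs_Cre_le_Cnorm z : Rabs (Cre z) <= Cnorm z.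
Proof. by rewrite -sqrt_Rsqr_abs; apply: sqrt_le_1_alt; rewrite /Rsqr /=; nra. Qed.

Lemma Rabs_Cim_le_Cnorm z : Rabs (Cim z) <= Cnorm z.
Proof. by rewrite -sqrt_Rsqr_abs; apply: sqrt_le_1_alt; rewrite /Rsqr /=; nra. Qed.

Lemma values_bounded (u : nat -> R) p :
  exists S, S > 0 /\ forall i, (i < p)%N -> Rabs (u i) <= S.
Proof.
elim: p => [|p [S [S_gt0 HS]]]; first by exists 1; split=> [|i]; [lra | rewrite ltn0].
exists (Rmax S (Rabs (u p))); split; first exact: Rlt_le_trans (Rmax_l _ _).
move=> i; rewrite ltnS leq_eqVlt => /predU1P [->|i_lt]; first exact: Rmax_r.
exact: Rle_trans (HS i i_lt) (Rmax_l _ _).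
Qed.

(* Enumerate the index pairs (i, k) of an m x m array as i * m + k. *)
Lemma entries_bounded (A : Rmat) m :
  exists S, S > 0 /\
    forall i k, (i < m)%coq_nat -> (k < m)%coq_nat -> Rabs (A i k) <= S.
Proof.
have [S [S_gt0 HS]] := values_bounded (fun p => A (p %/ m) (p %% m)) (m * m).
exists S; split=> // i k /ltP i_lt /ltP k_lt.
have m_gt0 : (0 < m)%N by apply: leq_ltn_trans i_lt.
have := HS (i * m + k)%N.
rewrite divnMDl // divn_small // addn0 modnMDl modn_small //; apply.
by rewrite (leq_trans (_ : _ < i * m + m)%N) ?ltn_add2l // -mulSnr leq_mul2r i_lt orbT.
Qed.

Lemma Ccontinuous_scaled m (f : Rmat -> Cplx) (dom : Rmat -> Prop) (A : Rmat) :
  (forall A0, dom A0 -> forall eps, eps > 0 -> exists delta, delta > 0 /\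
     forall A1, dom A1 ->
       (forall i k, (i < m)%coq_nat -> (k < m)%coq_nat -> Rabs (A1 i k - A0 i k) < delta) ->
       Cnorm (Csub (f A1) (f A0)) < eps) ->
  (forall t, dom (fun i k => t * A i k)) ->
  Ccontinuous (fun t => f (fun i k => t * A i k)).
Proof.
move=> f_cont dom_tA t0; have [S [S_gt0 HS]] := entries_bounded A m.
have near_t0 eps : eps > 0 -> exists d, d > 0 /\ forall t, Rabs (t - t0) < d ->
    Cnorm (Csub (f (fun i k => t * A i k)) (f (fun i k => t0 * A i k))) < eps.
  move=> eps_gt0; have [d [d_gt0 Hd]] := f_cont _ (dom_tA t0) eps eps_gt0.
  exists (d / S); split=> [|t t_near]; first exact: Rdiv_lt_0_compat.
  apply: Hd => // i k i_lt k_lt; rewrite -Rmult_minus_distr_r Rabs_mult.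
  apply: Rle_lt_trans (Rmult_le_compat_l _ _ _ (Rabs_pos _) (HS i k i_lt k_lt)) _.
  by apply: Rlt_le_trans (Rmult_lt_compat_r _ _ _ S_gt0 t_near) _; right; field; lra.
split; apply: continuity_pt_eps => eps /near_t0 [d [d_gt0 Hd]];
  exists d; split=> // t /Hd.
  exact: Rle_lt_trans (Rabs_Cre_le_Cnorm _).
exact: Rle_lt_trans (Rabs_Cim_le_Cnorm _).
Qed.

(* Re (F conj Phi) is continuous and nowhere zero, so it cannot change sign. *)
Lemma continuous_square_roots_agree (F Phi : R -> Cplx) :
  Ccontinuous F -> Ccontinuous Phi ->
  (forall t, F t * F t = Phi t * Phi t)%R ->
  (forall t, Phi t <> 0%R) ->
  Cim (F 0) = 0 -> Cre (F 0) > 0 -> Cim (Phi 0) = 0 -> Cre (Phi 0) > 0 ->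
  F 1 = Phi 1.
Proof.
move=> cF cPhi sq Phi_neq0 F0i F0r Phi0i Phi0r.
have pm t : F t = Phi t \/ F t = Copp (Phi t).
  have /eqP : ((F t - Phi t) * (F t + Phi t) = 0)%R.
    by rewrite -subr_sqr !expr2 sq subrr.
  by rewrite mulf_eq0 subr_eq0 addr_eq0 => /orP [] /eqP; [left | right].
have norm_gt0 t : Cre (Phi t) * Cre (Phi t) + Cim (Phi t) * Cim (Phi t) > 0.
  have [re0|re_neq0] := Req_dec (Cre (Phi t)) 0.
    have im_neq0 : Cim (Phi t) <> 0 by move=> im0; apply: (Phi_neq0 t); apply: Cplx_ext.
    by rewrite re0; have := Rsqr_pos_lt _ im_neq0; rewrite /Rsqr; lra.
  by have := Rsqr_pos_lt _ re_neq0; have := Rle_0_sqr (Cim (Phi t)); rewrite /Rsqr; lra.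
pose v t := Cre (F t) * Cre (Phi t) + Cim (F t) * Cim (Phi t).
have v_neq0 t : v t <> 0.
  by rewrite /v; have := norm_gt0 t; case: (pm t) => -> /=; lra.
have v_cont : continuity v.
  move=> t; case: (cF t) (cPhi t) => ? ? [? ?].
  by apply: continuity_pt_plus; apply: continuity_pt_mult.
have v0_gt0 : v 0 > 0 by rewrite /v F0i Phi0i; nra.
case: (pm 1) => // F1.
have v1_lt0 : v 1 < 0 by rewrite /v F1 /=; have := norm_gt0 1; lra.
have [z [_ vz0]] := IVT (fun t => - v t) 0 1 (continuity_opp _ v_cont) Rlt_0_1
  ltac:(lra) ltac:(lra).
by case: (v_neq0 z); lra.
Qed.

Local Close Scope R_scope.
Local Open Scope ring_scope.

Lemma Csum_big n (F : nat -> Cplx) : Csum n F = \sum_(i < n) F i.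
Proof.
have seq_iota a k : List.seq a k = iota a k by elim: k a => [|k IH] a //=; rewrite IH.
rewrite /Csum seq_iota -(big_mkord xpredT F) /index_iota subn0.
by elim: (iota 0 n) => [|x l IH] /=; rewrite ?big_nil ?big_cons ?IH.
Qed.

Lemma RC_Rsum n (F : nat -> R) : RC (Rsum n F) = Csum n (fun i => RC (F i)).
Proof. by rewrite /Rsum /Csum; elim: (List.seq 0 n) => [|a l IH] //=; rewrite RC_add IH. Qed.

Local Notation cj := (map_mx Cconj).

Definition mxC p q (A : Cmat) : 'M[Cplx]_(p, q) := \matrix_(i < p, k < q) A i k.
Definition mxR p q (A : Rmat) : 'M[Cplx]_(p, q) := mxC p q (complexify A).
Definition colC p (x : Cvec) : 'cV[Cplx]_p := \col_(i < p) x i.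
Definition colR p (x : Rvec) : 'cV[Cplx]_p := colC p (fun i => RC (x i)).

(* The array of a matrix, padded with zeros outside its size. *)
Definition Cmat_of p q (X : 'M[Cplx]_(p, q)) : Cmat := fun i k =>
  match insub i : option 'I_p, insub k : option 'I_q with
  | Some i', Some k' => X i' k'
  | _, _ => 0
  end.
Definition Cvec_of p (c : 'cV[Cplx]_p) : Cvec := fun i => Cmat_of c i 0%N.

Lemma mxC_Cmat_of p q (X : 'M[Cplx]_(p, q)) : mxC p q (Cmat_of X) = X.
Proof. by apply/matrixP=> i k; rewrite mxE /Cmat_of !valK. Qed.

Lemma colC_Cvec_of p (c : 'cV[Cplx]_p) : colC p (Cvec_of c) = c.
Proof.
by apply/matrixP=> i k; rewrite mxE (ord1 k) /Cvec_of /Cmat_of valK (valK (ord0 : 'I_1)).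
Qed.

Lemma mxC_eq p q A B : Cmat_eq p q A B -> mxC p q A = mxC p q B.
Proof. by move=> eqAB; apply/matrixP=> i k; rewrite !mxE eqAB //; apply/ltP. Qed.

Lemma mxR_eq p q A B : Rmat_eq p q A B -> mxR p q A = mxR p q B.
Proof. by move=> eqAB; apply/matrixP=> i k; rewrite !mxE /complexify eqAB //; apply/ltP. Qed.

Lemma mxC_mul p q r (A B : Cmat) : mxC p r (Cmul_m q A B) = mxC p q A *m mxC q r B.
Proof.
by apply/matrixP=> i k; rewrite !mxE /Cmul_m Csum_big; apply: eq_bigr => l _; rewrite !mxE.
Qed.

Lemma mxR_mul p q r A B : mxR p r (Rmul_m q A B) = mxR p q A *m mxR q r B.
Proof.
rewrite -mxC_mul; apply/matrixP=> i k; rewrite !mxE /complexify RC_Rsum.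
by congr Csum; apply: functional_extensionality => l; rewrite RC_mul.
Qed.

Lemma colC_Cmv p q A x : colC p (Cmv q A x) = mxC p q A *m colC q x.
Proof.
by apply/matrixP=> i k; rewrite !mxE /Cmv Csum_big; apply: eq_bigr => l _; rewrite !mxE.
Qed.

Lemma colR_Rmv p q A x : colR p (Rmv q A x) = mxR p q A *m colR q x.
Proof.
rewrite /colR -colC_Cmv; apply/matrixP=> i k; rewrite !mxE RC_Rsum.
by congr Csum; apply: functional_extensionality => l; rewrite RC_mul.
Qed.

Lemma mxC_id p : mxC p p Cid = 1%:M.
Proof.
apply/matrixP=> i k; rewrite !mxE /Cid; have [<-|ik] := eqVneq i k.
  by rewrite PeanoNat.Nat.eqb_refl.
by case: PeanoNat.Nat.eqb_spec => [/val_inj/eqP|_]; rewrite ?(negbTE ik).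
Qed.

Lemma mxR_id p : mxR p p Rid = 1%:M.
Proof.
rewrite -(mxC_id p); apply/matrixP=> i k; rewrite !mxE /complexify /Rid /Cid.
by case: PeanoNat.Nat.eqb.
Qed.

Lemma mxC_sub p q A B : mxC p q (Csub_m A B) = mxC p q A - mxC p q B.
Proof. by apply/matrixP=> i k; rewrite !mxE. Qed.

Lemma mxR_add p q A B : mxR p q (Radd_m A B) = mxR p q A + mxR p q B.
Proof. by apply/matrixP=> i k; rewrite !mxE /complexify RC_add. Qed.

Lemma mxR_sub p q A B : mxR p q (Rsub_m A B) = mxR p q A - mxR p q B.
Proof. by apply/matrixP=> i k; rewrite !mxE /complexify RC_sub. Qed.

Lemma mxR_scale p q c A : mxR p q (Rscale_m c A) = RC c *: mxR p q A.
Proof. by apply/matrixP=> i k; rewrite !mxE /complexify RC_mul. Qed.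

Lemma mxC_conj p q A : mxC p q (Cconj_m A) = cj (mxC p q A).
Proof. by apply/matrixP=> i k; rewrite !mxE. Qed.

Lemma mxR_conj p q A : cj (mxR p q A) = mxR p q A.
Proof. by apply/matrixP=> i k; rewrite !mxE Cconj_RC. Qed.

Lemma mxR_skew m w :
  (forall i k, (i < m)%coq_nat -> (k < m)%coq_nat -> w k i = Ropp (w i k)) ->
  (mxR m m w)^T = - mxR m m w.
Proof.
by move=> w_skew; apply/matrixP=> i k; rewrite !mxE /complexify w_skew ?RC_opp //; apply/ltP.
Qed.

Lemma omegaC_mx m w x y :
  omegaC m w x y = ((colC m x)^T *m mxR m m w *m colC m y) 0 0.
Proof.
rewrite /omegaC Csum_big !mxE.
under eq_bigr => i _ do rewrite Csum_big.
rewrite exchange_big /=; apply: eq_bigr => k _.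
by rewrite !mxE big_distrl /=; apply: eq_bigr => i _; rewrite !mxE.
Qed.

Lemma omegaR_mx m w x y :
  RC (omegaR m w x y) = ((colR m x)^T *m mxR m m w *m colR m y) 0 0.
Proof.
rewrite -omegaC_mx /omegaR /omegaC RC_Rsum; congr Csum.
apply: functional_extensionality => i; rewrite RC_Rsum; congr Csum.
by apply: functional_extensionality => k; rewrite !RC_mul.
Qed.

Lemma hermE_mx m n w (B : Cmat) a b :
  hermE m w (Cmv n B a) (Cmv n B b) =
  - Ci * ((colC n a)^T *m ((mxC m n B)^T *m mxR m m w *m cj (mxC m n B))
          *m cj (colC n b)) 0 0.
Proof.
rewrite /hermE omegaC_mx.
have -> : colC m (fun i => Cconj (Cmv n B b i)) = cj (colC m (Cmv n B b)).
  by apply/matrixP=> i k; rewrite !mxE.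
by rewrite !colC_Cmv map_mxM trmx_mul !mulmxA.
Qed.

Lemma Cdet_det n (A : Cmat) : Cdet n A = \det (mxC n n A).
Proof.
elim: n A => [|n IH] A; first by rewrite det_mx00.
rewrite (expand_det_row _ ord0) /= Csum_big; apply: eq_bigr => k _.
have -> : Csign k = (-1) ^+ k.
  rewrite /Csign; elim: (k : nat) => [|l IHl] //; rewrite exprS -IHl.
  rewrite PeanoNat.Nat.even_succ -PeanoNat.Nat.negb_even.
  by case: Nat.even; rewrite /= ?mulN1r ?opprK.
rewrite IH /cofactor !mxE add0n !CmulE [_ * A 0%N k]mulrC -mulrA; congr (_ * (_ * \det _)).
apply/matrixP=> i l; rewrite !mxE /= /bump /=; congr (A _ _).
by case: (ltnP l k) => [/ltP/PeanoNat.Nat.ltb_lt|/leP/PeanoNat.Nat.ltb_ge] ->.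
Qed.

Lemma Ccontinuous_det n (X : R -> 'M[Cplx]_n) :
  (forall i k, Ccontinuous (fun t => X t i k)) -> Ccontinuous (fun t => \det (X t)).
Proof.
move=> cX; have -> : (fun t => \det (X t)) = (fun t => Cdet n (Cmat_of (X t))).
  by apply: functional_extensionality => t; rewrite Cdet_det mxC_Cmat_of.
apply: Ccontinuous_Cdet => i k; rewrite /Cmat_of.
case: (insub i : option 'I_n) => [i'|]; last exact: Ccontinuous_const.
by case: (insub k : option 'I_n) => [k'|]; [apply: cX | apply: Ccontinuous_const].
Qed.

Lemma is_sym_mx m w j A :
  (mxR m m A)^T *m mxR m m w *m mxR m m j = mxR m m w *m mxR m m j *m mxR m m A ->
  Defs.is_sym m w j A.
Proof.
move=> A_sym x y; apply: RC_inj; rewrite !omegaR_mx !colR_Rmv; congr (_ 0 0).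
by rewrite trmx_mul -!mulmxA; congr (_ *m _); rewrite !mulmxA A_sym -!mulmxA.
Qed.

Lemma cjK p q (X : 'M[Cplx]_(p, q)) : cj (cj X) = X.
Proof. by apply/matrixP=> i k; rewrite !mxE CconjK. Qed.

Lemma mx_eq_bilinear n (X Y : 'M[Cplx]_n) :
  (forall a b : 'cV_n, (a^T *m X *m b) 0 0 = (a^T *m Y *m b) 0 0) -> X = Y.
Proof.
move=> XY; apply/matrixP=> i k; have := XY (delta_mx i 0) (delta_mx k 0).
by rewrite trmx_delta -!rowE -!colE !mxE.
Qed.

Lemma det_neq0_of_ker0 (n : nat) (X : 'M[Cplx]_n) :
  (forall c : 'cV_n, X *m c = 0 -> c = 0) -> \det X != 0.
Proof.
move=> ker0; rewrite -det_tr; apply/negP => /det0P [v v_neq0 vX].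
have /ker0 vT0 : X *m v^T = 0 by rewrite -[X *m v^T]trmxK trmx_mul trmxK vX trmx0.
by move: v_neq0; rewrite -[v]trmxK vT0 trmx0 eqxx.
Qed.

Lemma cayley_transform_skew n (K M N : 'M[Cplx]_n) :
  M^T *m K *m cj M = K -> (M - 1%:M) *m N = 1%:M -> N *m (M - 1%:M) = 1%:M ->
  ((1%:M + M) *m N)^T *m K = - (K *m cj ((1%:M + M) *m N)).
Proof.
move=> M_unitary NU NU'; set T := (1%:M + M) *m N; set U := M - 1%:M.
have TU : T *m U = 1%:M + M by rewrite /T -mulmxA NU' mulmx1.
have TUc : cj T *m cj U = 1%:M + cj M by rewrite -map_mxM TU map_mxD map_mx1.
have zmod_id (V : zmodType) (a b c : V) : c + a - (a + b) + (b - a + (a - c)) = 0.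
  by rewrite addrKA subrKA subrKA subrr.
have key : U^T *m (T^T *m K + K *m cj T) *m cj U = 0.
  rewrite mulmxDr mulmxDl mulmxA -trmx_mul TU -!mulmxA TUc.
  rewrite /U map_mxB map_mx1 !raddfD /= !raddfN /= trmx1.
  by rewrite !mulmx1 !mulmxDl ?mulmxBl ?mulNmx !mul1mx mulmxA M_unitary zmod_id.
have NUt : N^T *m U^T = 1%:M by rewrite -trmx_mul NU trmx1.
have UNc : cj U *m cj N = 1%:M by rewrite -map_mxM NU map_mx1.
apply/eqP; rewrite -subr_eq0 opprK; apply/eqP.
have <- : N^T *m (U^T *m (T^T *m K + K *m cj T) *m cj U) *m cj N = T^T *m K + K *m cj T.
  by rewrite !mulmxA NUt mul1mx -mulmxA UNc mulmx1.
by rewrite key mulmx0 mul0mx.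
Qed.

Section BlockDiagonalization.
Variable n : nat.
Variables (B : 'M[Cplx]_(n + n, n)) (W J G P : 'M[Cplx]_(n + n)) (M N Mi : 'M[Cplx]_n).

Let K := B^T *m W *m cj B.
Let Q : 'M[Cplx]_(n + n) := row_mx B (cj B).

Hypothesis Lagrangian : B^T *m W *m B = 0.
Hypothesis W_real : cj W = W.
Hypothesis W_skew : W^T = - W.
Hypothesis J_real : cj J = J.
Hypothesis K_definite : forall c : 'cV_n, c != 0 -> (c^T *m K *m cj c) 0 0 != 0.
Hypothesis B_inj : forall c : 'cV_n, B *m c = 0 -> c = 0.
Hypothesis M_unitary : M^T *m K *m cj M = K.
Hypothesis J_B : J *m B = Ci *: B.
Hypothesis G_B : G *m B = B *m M.
Hypothesis G_Bbar : G *m cj B = cj B *m cj M.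
Hypothesis N_inv_r : (M - 1%:M) *m N = 1%:M.
Hypothesis N_inv_l : N *m (M - 1%:M) = 1%:M.
Hypothesis Mi_inv : M *m Mi = 1%:M.
Hypothesis P_inv : P *m (1%:M - G) = 1%:M.

(* A vector of E lying in conj E is isotropic for the Hermitian form, hence 0. *)
Lemma basis_unitmx : Q \in unitmx.
Proof.
rewrite unitmxE unitfE; apply: det_neq0_of_ker0 => v.
rewrite -[v]vsubmxK mul_row_col; set a := usubmx v; set b := dsubmx v => Qv.
have a0 : a = 0.
  apply/eqP; apply: contraT => /K_definite; rewrite /K.
  have Ba : B *m a = - (cj B *m b) by apply/eqP; rewrite -addr_eq0 Qv.
  have Bca : cj B *m cj a = - (B *m cj b) by rewrite -map_mxM Ba map_mxN map_mxM cjK.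
  have -> : a^T *m (B^T *m W *m cj B) *m cj a = - (a^T *m (B^T *m W *m B) *m cj b).
    by rewrite !mulmxA -(mulmxA (a^T *m B^T *m W)) Bca mulmxN -!mulmxA.
  by rewrite Lagrangian mulmx0 mul0mx oppr0 mxE eqxx.
have b0 : b = 0.
  move: Qv; rewrite a0 mulmx0 add0r => Bcb.
  have /B_inj cb0 : B *m cj b = 0 by rewrite -[B]cjK -map_mxM Bcb map_mx0.
  by rewrite -[b]cjK cb0 map_mx0.
by rewrite a0 b0; apply/matrixP=> i k; rewrite !mxE; case: splitP => *; rewrite mxE.
Qed.

Definition acts_blockwise (X : 'M[Cplx]_(n + n)) (X1 X2 : 'M[Cplx]_n) :=
  X *m Q = Q *m block_mx X1 0 0 X2.

Lemma acts_blockwise_mul X X1 X2 Y Y1 Y2 :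
  acts_blockwise X X1 X2 -> acts_blockwise Y Y1 Y2 ->
  acts_blockwise (X *m Y) (X1 *m Y1) (X2 *m Y2).
Proof.
move=> hX hY; rewrite /acts_blockwise -mulmxA hY mulmxA hX -mulmxA mulmx_block.
by rewrite !mulmx0 !mul0mx !addr0 !add0r.
Qed.

Lemma acts_blockwise_add X X1 X2 Y Y1 Y2 :
  acts_blockwise X X1 X2 -> acts_blockwise Y Y1 Y2 ->
  acts_blockwise (X + Y) (X1 + Y1) (X2 + Y2).
Proof.
by move=> hX hY; rewrite /acts_blockwise mulmxDl hX hY -mulmxDr add_block_mx addr0.
Qed.

Lemma acts_blockwise_scale a X X1 X2 :
  acts_blockwise X X1 X2 -> acts_blockwise (a *: X) (a *: X1) (a *: X2).
Proof.
by move=> hX; rewrite /acts_blockwise -scalemxAl hX scalemxAr scale_block_mx !scaler0.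
Qed.

Lemma acts_blockwise_scalar a : acts_blockwise a%:M a%:M a%:M.
Proof. by rewrite /acts_blockwise -scalar_mx_block mul_mx_scalar mul_scalar_mx. Qed.

Lemma acts_blockwise_G : acts_blockwise G M (cj M).
Proof.
by rewrite /acts_blockwise /Q mul_mx_row mul_row_block G_B G_Bbar !mulmx0 addr0 add0r.
Qed.

Lemma acts_blockwise_J : acts_blockwise J Ci%:M (- Ci)%:M.
Proof.
rewrite /acts_blockwise /Q mul_mx_row mul_row_block !mulmx0 addr0 add0r.
rewrite !mul_mx_scalar J_B; congr row_mx.
by rewrite -J_real -map_mxM J_B map_mxZ; congr (_ *: _); exact: Cconj_Ci.
Qed.

Lemma acts_blockwise_P : acts_blockwise P (- N) (- cj N).
Proof.
have one_sub_G : acts_blockwise (1%:M - G) (1%:M - M) (1%:M - cj M).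
  apply: acts_blockwise_add; first exact: acts_blockwise_scalar.
  by rewrite -!scaleN1r; apply: acts_blockwise_scale; apply: acts_blockwise_G.
have inv_l : (1%:M - M) *m - N = 1%:M by rewrite mulmxN -mulNmx opprB N_inv_r.
have inv_lc : (1%:M - cj M) *m - cj N = 1%:M.
  by move: (congr1 cj inv_l); rewrite map_mxM map_mxN map_mxB map_mx1.
have Q_eq : Q = (1%:M - G) *m Q *m block_mx (- N) 0 0 (- cj N).
  rewrite one_sub_G -mulmxA mulmx_block !mulmx0 !mul0mx !addr0 !add0r.
  by rewrite inv_l inv_lc -scalar_mx_block mulmx1.
by rewrite /acts_blockwise {1}Q_eq !mulmxA P_inv mul1mx.
Qed.

Let half := RC (/2).
Let T := (1%:M + M) *m N.

Definition Amx := half *: ((1%:M + G) *m P *m J).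
Definition XE (t : R) := half *: (1%:M + RC t *: T).
Definition XEbar (t : R) := half *: (1%:M - RC t *: cj T).

Lemma det_XE_0 : \det (XE R0) = RC (pow (/2) n).
Proof. by rewrite /XE (_ : RC R0 = 0) // scale0r addr0 detZ det1 mulr1 RC_pow. Qed.

Lemma Ccontinuous_det_XE : Ccontinuous (fun t => \det (XE t)).
Proof.
apply: Ccontinuous_det => i k.
have -> : (fun t => XE t i k) = fun t => Cmul half (Cadd (1%:M i k) (Cmul (RC t) (T i k))).
  by apply: functional_extensionality => t; rewrite /XE !mxE.
apply: Ccontinuous_mul; first exact: Ccontinuous_const.
apply: Ccontinuous_add; first exact: Ccontinuous_const.
by apply: Ccontinuous_mul; [exact: Ccontinuous_RC | exact: Ccontinuous_const].
Qed.

Lemma acts_blockwise_A :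
  acts_blockwise Amx (half *: ((1%:M + M) *m - N *m Ci%:M))
                     (half *: ((1%:M + cj M) *m - cj N *m (- Ci)%:M)).
Proof.
apply: acts_blockwise_scale; apply: acts_blockwise_mul; last exact: acts_blockwise_J.
apply: acts_blockwise_mul; last exact: acts_blockwise_P.
by apply: acts_blockwise_add; [apply: acts_blockwise_scalar | apply: acts_blockwise_G].
Qed.

Lemma acts_blockwise_half_iA t : acts_blockwise (half%:M + (Ci * RC t) *: Amx) (XE t) (XEbar t).
Proof.
have := acts_blockwise_add (acts_blockwise_scalar half)
  (acts_blockwise_scale (Ci * RC t) acts_blockwise_A).
have -> : half%:M + (Ci * RC t) *: (half *: ((1%:M + M) *m - N *m Ci%:M)) = XE t.
  rewrite mulmxN mulNmx mul_mx_scalar /XE -/T.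
  by apply/matrixP=> i k; rewrite !mxE; case: (i == k);
    rewrite /= ?mulr1n ?mulr0n; apply: Cplx_ext => /=; ring.
have -> : half%:M + (Ci * RC t) *: (half *: ((1%:M + cj M) *m - cj N *m (- Ci)%:M))
          = XEbar t.
  have cjT : cj T = (1%:M + cj M) *m cj N by rewrite map_mxM map_mxD map_mx1.
  rewrite mulmxN mulNmx mul_mx_scalar /XEbar cjT.
  by apply/matrixP=> i k; rewrite !mxE; case: (i == k);
    rewrite /= ?mulr1n ?mulr0n; apply: Cplx_ext => /=; ring_simplify; reflexivity.
by [].
Qed.

Lemma det_blockwise X X1 X2 : acts_blockwise X X1 X2 -> \det X = \det X1 * \det X2.
Proof.
move/(congr1 determinant); rewrite !det_mulmx det_ublock [\det Q * _]mulrC.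
by apply: mulIf; have := basis_unitmx; rewrite unitmxE unitfE.
Qed.

Lemma det_K_neq0 : \det K != 0.
Proof.
apply: det_neq0_of_ker0 => c Kc; apply/eqP; apply: contraT => c_neq0.
have : cj c != 0 by rewrite map_mx_eq0.
by move/K_definite; rewrite cjK -mulmxA Kc mulmx0 mxE eqxx.
Qed.

Lemma T_skew : T^T *m K = - (K *m cj T).
Proof. exact: cayley_transform_skew M_unitary N_inv_r N_inv_l. Qed.

Lemma det_XEbar t : \det (XEbar t) = \det (XE t).
Proof.
have K_XEbar : K *m XEbar t = (XE t)^T *m K.
  rewrite /XE /XEbar -scalemxAr [(half *: _)^T]linearZ /= -scalemxAl; congr (_ *: _).
  rewrite [(1%:M + _)^T]raddfD /= trmx1 [(RC t *: T)^T]linearZ /=.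
  by rewrite mulmxBr mulmx1 mulmxDl mul1mx -scalemxAl T_skew -scalemxAr scalerN.
by move: (congr1 determinant K_XEbar); rewrite !det_mulmx det_tr mulrC => /(mulIf det_K_neq0).
Qed.

(* T is K-skew, so 1 + t T has no kernel: c^T K conj c would equal its own opposite. *)
Lemma det_XE_neq0 t : \det (XE t) != 0.
Proof.
apply: det_neq0_of_ker0 => c XEc; apply/eqP; apply: contraT => /K_definite.
have Tc : RC t *: (T *m c) = - c.
  move: XEc; rewrite /XE -scalemxAl => /eqP; rewrite scaler_eq0.
  have -> : (half == 0) = false by apply/negbTE/eqP => /(f_equal Cre) /=; lra.
  by rewrite mulmxDl mul1mx -scalemxAl addrC addr_eq0 => /eqP.
have Tc_bar : RC t *: (cj T *m cj c) = - cj c.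
  by rewrite -map_mxM -[RC t]Cconj_RC -map_mxZ Tc map_mxN.
have form_opp : (RC t *: (T *m c))^T *m K *m cj c = - (c^T *m K *m cj c).
  by rewrite Tc raddfN /= !mulNmx.
have form_same : (RC t *: (T *m c))^T *m K *m cj c = c^T *m K *m cj c.
  rewrite linearZ /= trmx_mul -!scalemxAl -(mulmxA c^T) T_skew mulmxN mulNmx.
  have -> : c^T *m (K *m cj T) *m cj c = c^T *m K *m (cj T *m cj c) by rewrite !mulmxA.
  by rewrite scalerN scalemxAr Tc_bar mulmxN opprK.
set x := (c^T *m K *m cj c) 0 0.
have x_opp : x = - x by rewrite /x -[in LHS]form_same form_opp mxE.
have -> : x = 0.
  by apply: Cplx_ext; [move: (f_equal Cre x_opp) | move: (f_equal Cim x_opp)] => /=; lra.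
by rewrite eqxx.
Qed.

(* 1/2 (1 + T) = 1/2 ((M - 1) + (1 + M)) N = M N. *)
Lemma det_XE_1 : \det (XE R1) * \det (1%:M - Mi) = 1.
Proof.
have XE1 : XE R1 = M *m N.
  rewrite /XE (_ : RC R1 = 1) // scale1r.
  have -> : 1%:M + T = (M + M) *m N by rewrite -N_inv_r -mulmxDl addrA subrK.
  rewrite scalemxAl; congr (_ *m _).
  by apply/matrixP=> i k; rewrite !mxE; apply: Cplx_ext => /=; field.
have -> : 1%:M - Mi = (M - 1%:M) *m Mi by rewrite mulmxBl Mi_inv mul1mx.
by rewrite -det_mulmx XE1 mulmxA -(mulmxA M) N_inv_l mulmx1 Mi_inv det1.
Qed.

Lemma det_half_plus_iA t : \det (half%:M + (Ci * RC t) *: Amx) = \det (XE t) ^+ 2.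
Proof. by rewrite (det_blockwise (acts_blockwise_half_iA t)) det_XEbar expr2. Qed.

Lemma W_in_basis : Q^T *m W *m Q = block_mx 0 K (- K^T) 0.
Proof.
rewrite /Q tr_row_mx mul_col_mx mul_col_row; congr block_mx.
- exact: Lagrangian.
- by rewrite /K !trmx_mul trmxK W_skew mulNmx mulmxN opprK !mulmxA.
- have -> : (cj B)^T = cj B^T by apply/matrixP=> i k; rewrite !mxE.
  by rewrite -W_real -!map_mxM Lagrangian map_mx0.
Qed.

Lemma congruence_inj (X Y : 'M[Cplx]_(n + n)) : Q^T *m X *m Q = Q^T *m Y *m Q -> X = Y.
Proof.
have Q_unit := basis_unitmx; have Qt_unit : Q^T \in unitmx by rewrite unitmx_tr.
move/(congr1 (fun Z => invmx Q^T *m Z *m invmx Q)).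
by rewrite -!mulmxA !mulKmx // !mulmxA !mulmxK.
Qed.

(* In the basis Q, W is antidiagonal with blocks K and -K^T while A and J are
   diagonal, and K intertwines the two diagonal blocks of A. *)
Lemma Amx_sym : Amx^T *m W *m J = W *m J *m Amx.
Proof.
set al := half *: ((1%:M + M) *m - N *m Ci%:M).
set be := half *: ((1%:M + cj M) *m - cj N *m (- Ci)%:M).
have A_Q : Amx *m Q = Q *m block_mx al 0 0 be := acts_blockwise_A.
have J_Q : J *m Q = Q *m block_mx Ci%:M 0 0 (- Ci)%:M := acts_blockwise_J.
have al_be : al^T *m K = K *m be.
  rewrite /al /be !mulmxN !mulNmx !mul_mx_scalar !scalerN linearN /= linearZ /= linearZ /=.
  have -> : (1%:M + cj M) *m cj N = cj T by rewrite /T map_mxM map_mxD map_mx1.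
  rewrite -/T linearZ /= scalerN scalerA mulNmx -scalemxAl T_skew scalerN opprK.
  by rewrite mulmxN scalerA -scalemxAr mulrN scaleNr opprK.
have be_al : be^T *m K^T = K^T *m al by rewrite -trmx_mul -al_be trmx_mul trmxK.
apply: congruence_inj.
have -> : Q^T *m (Amx^T *m W *m J) *m Q = (Amx *m Q)^T *m W *m (J *m Q).
  by rewrite trmx_mul !mulmxA.
have -> : Q^T *m (W *m J *m Amx) *m Q = Q^T *m W *m (J *m (Amx *m Q)).
  by rewrite !mulmxA.
rewrite A_Q (mulmxA J Q) J_Q trmx_mul.
set DA := block_mx al 0 0 be; set DJ := block_mx Ci%:M 0 0 (- Ci)%:M.
have -> : DA^T *m Q^T *m W *m (Q *m DJ) = DA^T *m (Q^T *m W *m Q) *m DJ.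
  by rewrite !mulmxA.
have -> : Q^T *m W *m (Q *m DJ *m DA) = (Q^T *m W *m Q) *m DJ *m DA.
  by rewrite !mulmxA.
rewrite W_in_basis /DA /DJ tr_block_mx !trmx0 !mulmx_block !mulmx0 !mul0mx !addr0 !add0r.
congr block_mx; rewrite ?mul0mx //.
  by rewrite al_be !mul_mx_scalar -scalemxAl.
by rewrite mulmxN be_al !mul_mx_scalar -scalemxAl mulNmx scalerN.
Qed.

End BlockDiagonalization.

Section SymplecticData.
Variables (n : nat) (w j : Rmat) (B M Minv : Cmat) (g P : Rmat).
Local Notation m := (n + n)%N.
Hypothesis w_symplectic : symplectic_form m w.
Hypothesis B_polarization : positive_polarization m n w B.
Hypothesis j_structure : complex_structure_of m n j B.
Hypothesis M_unitary : unitary_on_E m n w B M.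
Hypothesis M_sub1_inv : Cinvertible n (Csub_m M Cid).
Hypothesis Minv_r : Cmat_eq n n (Cmul_m n M Minv) Cid.
Hypothesis g_iota : is_iota m n B M g.
Hypothesis P_inv : Rmat_eq m m (Rmul_m m P (Rsub_m Rid g)) Rid.

Let Bm := mxC m n B.
Let Mm := mxC n n M.
Let K := Bm^T *m mxR m m w *m cj Bm.

Lemma Lagrangian_mx : Bm^T *m mxR m m w *m Bm = 0.
Proof.
case: B_polarization => _ [_ [isotropic _]]; apply: mx_eq_bilinear => a b.
rewrite mulmx0 mul0mx [RHS]mxE.
have := isotropic (Cvec_of a) (Cvec_of b).
by rewrite omegaC_mx !colC_Cmv !colC_Cvec_of trmx_mul !mulmxA.
Qed.

Lemma K_definite_mx (c : 'cV_n) : c != 0 -> (c^T *m K *m cj c) 0 0 != 0.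
Proof.
move=> c_neq0; case: B_polarization => _ [_ [_ positive]].
have [i ci|c0] := pickP (fun i => c i 0 != 0); last first.
  by case/eqP: c_neq0; apply/matrixP=> i k; rewrite (ord1 k) mxE; apply/eqP/negbFE/c0.
have ci' : Cvec_of c i <> 0 by move=> e; move: ci; rewrite -{1}(colC_Cvec_of c) mxE e eqxx.
have [_ re_pos] := positive (Cvec_of c) (ex_intro _ (val i) (conj (elimT ltP (ltn_ord i)) ci')).
by apply/eqP => e; move: re_pos; rewrite hermE_mx colC_Cvec_of -/K e mulr0 /=; lra.
Qed.

Lemma B_inj_mx (c : 'cV_n) : Bm *m c = 0 -> c = 0.
Proof.
move=> Bc0; case: B_polarization => _ [independent _].
rewrite -(colC_Cvec_of c); apply/matrixP=> i k; rewrite !mxE.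
apply: independent; last exact/ltP.
move=> l /ltP l_lt.
have := congr1 (fun X : 'cV_m => X (Ordinal l_lt) 0) (@colC_Cmv m n B (Cvec_of c)).
by rewrite /= mxE colC_Cvec_of -/Bm Bc0 mxE.
Qed.

Lemma M_unitary_mx : Mm^T *m K *m cj Mm = K.
Proof.
apply: mx_eq_bilinear => a b.
have := M_unitary (Cvec_of a) (fun i => Cconj (Cvec_of b i)).
rewrite !hermE_mx !colC_Cmv.
have -> : colC n (fun i => Cconj (Cvec_of b i)) = cj b.
  by rewrite -[b in RHS]colC_Cvec_of; apply/matrixP=> i k; rewrite !mxE.
rewrite !colC_Cvec_of map_mxM cjK trmx_mul -/K => /(mulfI _).
by rewrite !mulmxA => -> //; rewrite oppr_eq0; apply/eqP => /(f_equal Cim) /=; lra.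
Qed.

Lemma W_skew_mx : (mxR m m w)^T = - mxR m m w.
Proof. exact: mxR_skew (proj1 w_symplectic). Qed.

Lemma J_B_mx : mxR m m j *m Bm = Ci *: Bm.
Proof.
case: j_structure => _ jB; have := mxC_eq jB; rewrite mxC_mul => ->.
by apply/matrixP=> i k; rewrite !mxE.
Qed.

Lemma G_B_mx : mxR m m g *m Bm = Bm *m Mm.
Proof. by case: g_iota => gB _; have := mxC_eq gB; rewrite !mxC_mul. Qed.

Lemma G_Bbar_mx : mxR m m g *m cj Bm = cj Bm *m cj Mm.
Proof. by case: g_iota => _ gB; have := mxC_eq gB; rewrite !mxC_mul !mxC_conj. Qed.

Lemma Minv_mx : Mm *m mxC n n Minv = 1%:M.
Proof. by have := mxC_eq Minv_r; rewrite mxC_mul mxC_id. Qed.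

Lemma P_inv_mx : mxR m m P *m (1%:M - mxR m m g) = 1%:M.
Proof. by have := mxR_eq P_inv; rewrite mxR_mul mxR_sub mxR_id. Qed.

Lemma A_of_mx : mxR m m (A_of m g P j) = Amx (mxR m m j) (mxR m m g) (mxR m m P).
Proof. by rewrite /A_of mxR_scale !mxR_mul mxR_add mxR_id. Qed.

Variable f : Rmat -> Cplx.
Hypothesis f_branch : sqrt_det_branch m w j f.

Lemma sqrt_det_branch_at_A : f (A_of m g P j) = Cinv (Cdet n (Csub_m Cid Minv)).
Proof.
have [Nc [NU NU']] := M_sub1_inv; set N := mxC n n Nc.
have N_inv_r : (Mm - 1%:M) *m N = 1%:M by move: (mxC_eq NU); rewrite mxC_mul mxC_sub mxC_id.
have N_inv_l : N *m (Mm - 1%:M) = 1%:M by move: (mxC_eq NU'); rewrite mxC_mul mxC_sub mxC_id.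
set A := A_of m g P j.
pose At t i k := Rmult t (A i k).
have At_mx t : mxR m m (At t) = RC t *: Amx (mxR m m j) (mxR m m g) (mxR m m P).
  by rewrite -A_of_mx; apply/matrixP=> i k; rewrite !mxE /complexify RC_mul.
have At_sym t : Defs.is_sym m w j (At t).
  apply: is_sym_mx; rewrite At_mx linearZ /= -!scalemxAl -scalemxAr.
  by rewrite (Amx_sym Lagrangian_mx (mxR_conj _ _ _) W_skew_mx (mxR_conj _ _ _) K_definite_mx
    B_inj_mx M_unitary_mx J_B_mx G_B_mx G_Bbar_mx N_inv_r N_inv_l P_inv_mx).
case: f_branch => f_cont [f_sq [f0_im f0_re]].
pose F t := f (At t); pose Phi t := \det (XE Mm N t).
have F_sq t : F t * F t = Phi t * Phi t.
  rewrite -CmulE (f_sq _ (At_sym t)) Cdet_det -expr2.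
  rewrite -(det_half_plus_iA Lagrangian_mx (mxR_conj _ _ _) K_definite_mx B_inj_mx
    M_unitary_mx J_B_mx G_B_mx G_Bbar_mx N_inv_r N_inv_l P_inv_mx t).
  congr (\det _); rewrite -scalerA -At_mx -scalemx1 -(mxR_id m); apply/matrixP=> i k.
  by rewrite /mxR /mxC !mxE /complexify; apply: Cplx_ext => /=; ring.
have Phi_neq0 t : Phi t <> 0.
  by apply/eqP; exact: det_XE_neq0 K_definite_mx M_unitary_mx N_inv_r N_inv_l t.
have F0 : F R0 = f Rzero.
  by congr f; do 2 apply: functional_extensionality => ?; exact: Rmult_0_l.
rewrite -F0 in f0_im f0_re.
have Phi0_im : Cim (Phi R0) = R0 by rewrite /Phi det_XE_0.
have Phi0_re : Rlt R0 (Cre (Phi R0)).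
  by rewrite /Phi det_XE_0; apply: pow_lt; apply: Rinv_0_lt_compat; apply: Rlt_0_2.
have F1 : F R1 = Phi R1 := continuous_square_roots_agree
  (Ccontinuous_scaled f_cont At_sym) (Ccontinuous_det_XE Mm N) F_sq Phi_neq0
  f0_im f0_re Phi0_im Phi0_re.
have -> : A = At R1 by do 2 apply: functional_extensionality => ?; rewrite /At Rmult_1_l.
rewrite -/(F R1) F1 Cdet_det mxC_sub mxC_id; symmetry; apply: mulr1_eq.
by rewrite mulrC (det_XE_1 N_inv_r N_inv_l Minv_mx).
Qed.

End SymplecticData.

Theorem mainTheorem8
  (n : nat) (w j : Rmat) (B M Minv : Cmat) (g P : Rmat) (f : Rmat -> Cplx) :
  symplectic_form (2 * n) w ->
  positive_polarization (2 * n) n w B ->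
  complex_structure_of (2 * n) n j B ->
  unitary_on_E (2 * n) n w B M ->
  Cinvertible n (Csub_m M Cid) ->
  Cmat_eq n n (Cmul_m n M Minv) Cid -> Cmat_eq n n (Cmul_m n Minv M) Cid ->
  is_iota (2 * n) n B M g ->
  Rmat_eq (2 * n) (2 * n) (Rmul_m (2 * n) P (Rsub_m Rid g)) Rid ->
  Rmat_eq (2 * n) (2 * n) (Rmul_m (2 * n) (Rsub_m Rid g) P) Rid ->
  sqrt_det_branch (2 * n) w j f ->
  f (A_of (2 * n) g P j) = Cinv (Cdet n (Csub_m Cid Minv)).
Proof.
rewrite mul2n -addnn => w_sympl B_pol j_str M_unit M1_inv Minv_r _ g_iota P_inv _ f_branch.
exact (sqrt_det_branch_at_A w_sympl B_pol j_str M_unit M1_inv Minv_r g_iota P_inv f_branch).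
Qed.
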